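(* Let $d\ge1$ and let $P(x_1,\dots,x_d)$ be a polynomial such that for every $\mathcal{X}\subseteq\{1,\dots,d\}$ the monomial $\prod_{j\in\mathcal{X}}x_j$ has a positive coefficient, and every other monomial has coefficient zero. Let $K(\mathbf{t})=\log P(e^{t_1},\dots,e^{t_d})$. Then $P$ has full rank and is aperiodic. Moreover, for every $\boldsymbol\lambda\in(0,1)^d$ and every $\boldsymbol\ell$ on the boundary of $[-\infty,+\infty]^d$, $K(\mathbf{t})-\boldsymbol\lambda^T\mathbf{t}\to+\infty$ as $\mathbf{t}\to\boldsymbol\ell$. Consequently there exists a unique $\boldsymbol\tau\in\mathbb{R}^d$ at which the gradient of $\mathbf{t}\mapsto K(\mathbf{t})-\boldsymbol\lambda^T\mathbf{t}$ vanishes.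
   Context: For a multivariate power series $B(\mathbf{z})$ in $d$ variables, its support is $S_B=\{\mathbf{n}\in\mathbb{Z}_{\ge0}^d:[\mathbf{z}^{\mathbf{n}}]B\neq0\}$ and $\Delta(S_B)=\{\mathbf{n}-\mathbf{m}:\mathbf{n},\mathbf{m}\in S_B\}$. $B$ has full rank if the real vector space spanned by $\Delta(S_B)$ has dimension $d$. For an integer $q\ge2$, $B$ is $q$-periodic if there exist nonnegative integers $p_1,\dots,p_d$, not all divisible by $q$, and an integer $r$ such that $\{\mathbf{p}^T\mathbf{n}:\mathbf{n}\in S_B\}\subseteq r+q\mathbb{Z}_{\ge0}$; $B$ is aperiodic if it is not $q$-periodic for any $q\ge2$. *)

From HB Require Import structures.
From mathcomp Require Import all_boot all_order all_algebra.
From mathcomp Require Import all_classical all_reals all_analysis.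
From mathcomp Require mpoly.
Set Implicit Arguments. Unset Strict Implicit. Unset Printing Implicit Defensive.
Import Order.TTheory GRing.Theory Num.Theory.
Import numFieldNormedType.Exports.
Local Open Scope ring_scope.

Coercion mpoly.fun_of_multinom : mpoly.multinom >-> Funclass.

Section Defs.
Variables (R : realType) (d : nat).

(* A multivariate power series in d variables is given by its coefficient
   function on exponent vectors (multinomials 'X_{1..d}). *)
Definition series := mpoly.multinom d -> R.

Definition supp (B : series) : set (mpoly.multinom d) :=
  [set n | B n != 0].

Definition expvec (n : mpoly.multinom d) : 'rV[R]_d := \row_i ((n i)%:R).

Definition Delta (B : series) : set 'rV[R]_d :=
  [set v | exists n m, supp B n /\ supp B m /\ v = expvec n - expvec m].

(* full rank: the real span of Delta(S_B) has dimension d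
   (the span of a set is the union of the spans of its finite subfamilies). *)
Definition full_rank (B : series) : Prop :=
  exists s : seq 'rV[R]_d, (forall v, v \in s -> Delta B v) /\ \dim (vector.span s) = d.

Definition periodic (q : nat) (B : series) : Prop :=
  exists (p : 'I_d -> nat) (r : int),
    (exists i, ~~ (q %| p i)%N) /\
    forall n, supp B n ->
      exists k : nat, ((\sum_(i < d) p i * n i)%N)%:Z = r + ((q * k)%N)%:Z.

Definition aperiodic (B : series) : Prop :=
  forall q : nat, (2 <= q)%N -> ~ periodic q B.

Definition dotr (lam t : 'rV[R]_d) : R := \sum_(i < d) lam ord0 i * t ord0 i.

Definition Kfun (P : mpoly.mpoly d R) (t : 'rV[R]_d) : R :=
  ln (mpoly.meval (fun i => expR (t ord0 i)) P).

Definition near_ext (l : \bar R) (e : R) (x : R) : Prop :=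
  match l with
  | EFin r => `|x - r| < e
  | EPInf => e^-1 < x
  | ENInf => x < - e^-1
  end.

(* F(t) -> +oo as t -> l, t ranging over R^d, l in [-oo,+oo]^d
   (product topology of the extended reals). *)
Definition tends_to_pinfty (F : 'rV[R]_d -> R) (l : 'I_d -> \bar R) : Prop :=
  forall M : R, exists2 e : R, 0 < e &
    forall t : 'rV[R]_d, (forall i, near_ext (l i) e (t ord0 i)) -> M < F t.

End Defs.

From Pilot Require Import Defs.
From HB Require Import structures.
From mathcomp Require Import all_boot all_order all_algebra.
From mathcomp Require Import all_classical all_reals all_analysis.
From mathcomp Require mpoly.
From mathcomp Require Import ring lra zify.
Import Order.TTheory GRing.Theory Num.Theory.
Import numFieldNormedType.Exports.
Set Implicit Arguments.
Unset Strict Implicit.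
Unset Printing Implicit Defensive.

Local Open Scope ring_scope.

(* P(e^t) is the exponential sum Z(t) = \sum_m c_m exp(<m, t>) over the
   square-free exponent vectors m, all with c_m > 0.  Since 0 and the unit
   vectors are exponents, P has full rank and is aperiodic.  Keeping only the
   term of the exponent that indicates the positive coordinates of t gives
   K(t) - <lam, t> >= ln (min_m c_m) + min(lam_i, 1 - lam_i) |t_i| for every i.
   This coercivity yields the limits at the boundary and, by compactness, a
   global minimum, where the gradient vanishes.  A critical point tau is where
   the mean of m under the weights c_m exp(<m, tau>) equals lam.  The weights
   at another point sig are these weights tilted by exp(h_m), with
   h_m = <m, sig - tau>, and exponential tilting preserves the mean only if h
   is constant on the support; evaluating h at 0 and at the unit vectors then
   gives sig = tau. *)

Canonical mpoly.mpoly_multinom__canonical__eqtype_Equality.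

Section DirectionalDerivatives.
Context {R : realType} {V : normedModType R}.

Lemma is_derive_lineP (f : V -> R) (x v : V) (t D : R) :
  is_derive t 1 (fun s => f (x + s *: v)) D <-> is_derive (x + t *: v) v f D.
Proof.
have quotE : (fun h : R => h^-1 *: (((fun s => f (x + s *: v)) \o shift t) (h *: 1)
                                     - f (x + t *: v)))
           = (fun h : R => h^-1 *: ((f \o shift (x + t *: v)) (h *: v) - f (x + t *: v))).
  by apply/funext => h /=; rewrite [h%:A]mulr1 scalerDl addrCA.
by split=> -[dfx <-]; split; move: dfx; rewrite /derivable /derive ?quotE -?quotE.
Qed.

Lemma is_derive_line0 (f : V -> R) (x v : V) (D : R) :
  is_derive (0 : R) 1 (fun s => f (x + s *: v)) D <-> is_derive x v f D.
Proof. by rewrite is_derive_lineP scale0r addr0. Qed.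

Lemma is_derive_real_comp (f : V -> R) (g : R -> R) (x v : V) (Df Dg : R) :
  is_derive x v f Df -> is_derive (f x) 1 g Dg -> is_derive x v (g \o f) (Dg * Df).
Proof.
move=> /is_derive_line0 fD gD; apply/is_derive_line0.
by apply: (is_derive1_comp (f := g)); rewrite /= scale0r addr0.
Qed.

Lemma is_derive_big_seq (I : Type) (s : seq I) (F : I -> V -> R) (DF : I -> R)
    (x v : V) :
  (forall i, is_derive x v (F i) (DF i)) ->
  is_derive x v (fun y => \sum_(i <- s) F i y) (\sum_(i <- s) DF i).
Proof.
move=> FD; elim: s => [|i s IHs].
  by under [fun y => _]funext do rewrite big_nil; rewrite big_nil; exact: is_derive_cst.
under [fun y => _]funext do rewrite big_cons; rewrite big_cons.
exact: is_deriveD.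
Qed.

Lemma is_derive_at_min (f : V -> R) (x v : V) :
  (forall y, derivable f y v) -> (forall y, f x <= f y) -> is_derive x v f 0.
Proof.
move=> fD xmin; apply/is_derive_line0.
apply: (@derive1_at_min _ _ (-1) 1) => //.
- by move=> t _; apply: ex_derive; apply/is_derive_lineP; exact: derivableP.
- by rewrite in_itv /= ltrN10 ltr01.
- by move=> t _; rewrite scale0r addr0.
Qed.

End DirectionalDerivatives.

Section Coercivity.
Context {R : realType} {n : nat}.

Lemma coercive_has_min (f : 'rV[R]_n -> R) (C : R) (mu : 'I_n -> R) :
  continuous f -> (forall i, 0 < mu i) ->
  (forall (t : 'rV[R]_n) i, C + mu i * `|t ord0 i| <= f t) ->
  exists x, forall t, f x <= f t.
Proof.
move=> fC mu_gt0 f_ge.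
pose r i := (f 0 - C) / mu i.
have r_ge0 i : 0 <= r i.
  apply: divr_ge0; last exact: ltW.
  by rewrite subr_ge0; have := f_ge 0 i; rewrite mxE normr0 mulr0 addr0.
pose box := [set t : 'rV[R]_n | forall i, `[- r i, r i] (t ord0 i)]%classic.
have box0 : box 0 by move=> i /=; rewrite mxE in_itv /= oppr_le0 r_ge0.
have [x box_x x_min] : exists2 x, x \in box & forall t, t \in box -> f x <= f t.
  apply: EVT_min_rV; first by exists 0.
    exact: (rV_compact (A := fun i => `[- r i, r i]%classic)
             (fun i => @segment_compact R _ _)).
  exact: continuous_subspaceT.
exists x => t; have [t_box|t_nbox] := pselect (box t); first by apply: x_min; rewrite inE.
apply: (le_trans (x_min 0 _)); first by rewrite inE.
have [i r_lt] : exists i, r i < `|t ord0 i|.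
  apply: contra_notP t_nbox => /forallNP r_ge j /=.
  by rewrite in_itv /= -ler_norml leNgt; apply/negP/r_ge.
have mu_r : mu i * r i = f 0 - C by rewrite /r mulrC divfK ?gt_eqF.
have := f_ge t i; have : mu i * r i < mu i * `|t ord0 i| by rewrite ltr_pM2l.
lra.
Qed.

Lemma tends_to_pinfty_coercive (f : 'rV[R]_n -> R) (C mu : R) (l : 'I_n -> \bar R)
    (i : 'I_n) :
  0 < mu -> (forall t : 'rV[R]_n, C + mu * `|t ord0 i| <= f t) ->
  l i = +oo%E \/ l i = -oo%E -> tends_to_pinfty f l.
Proof.
move=> mu_gt0 f_ge l_inf M; pose r := `|(M - C) / mu| + 1.
have r_gt0 : 0 < r by rewrite ltr_wpDl.
have M_lt : M - C < mu * r.
  have := ler_norm ((M - C) / mu); rewrite -(ler_pM2r mu_gt0) divfK ?gt_eqF //.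
  by rewrite /r mulrDr mulr1 mulrC; lra.
exists r^-1; first by rewrite invr_gt0.
move=> t /(_ i) near_ti.
have r_lt : r < `|t ord0 i|.
  case: l_inf near_ti => -> /=; rewrite invrK => ti.
    exact: lt_le_trans ti (ler_norm _).
  by rewrite ltr_normr ltrNr ti orbT.
have := f_ge t; have : mu * r < mu * `|t ord0 i| by rewrite ltr_pM2l.
lra.
Qed.

End Coercivity.

Section RealInequalities.
Context {R : realType}.

Lemma min_mul_norm_le (l x : R) :
  0 < l < 1 -> Num.min l (1 - l) * `|x| <= ((0 < x)%R%:R - l) * x.
Proof.
case/andP=> l_gt0 l_lt1; have [x_gt0|x_le0] := ltP 0 x.
  by rewrite gtr0_norm // ler_pM2r // ge_min lexx orbT.
rewrite ler0_norm // sub0r mulrN -mulNr ler_wnM2r //.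
by rewrite lerN2 ge_min lexx.
Qed.

Lemma expR_mono_ge0 (x y : R) : 0 <= (x - y) * (expR x - expR y).
Proof.
have [x_le|y_lt] := leP x y; first by rewrite mulr_le0 // subr_le0 // ler_expR.
by rewrite mulr_ge0 // subr_ge0 ltW // ltr_expR.
Qed.

Lemma expR_mono_eq0 (x y : R) : (x - y) * (expR x - expR y) = 0 -> x = y.
Proof.
move/eqP; rewrite mulf_eq0 !subr_eq0 => /orP[/eqP //|/eqP exy].
by rewrite -(expRK x) exy expRK.
Qed.

Lemma tilted_mean_eq_const (I : eqType) (s : seq I) (a h : I -> R) :
  {in s, forall i, 0 < a i} ->
  (\sum_(i <- s) a i * h i) * (\sum_(i <- s) a i * expR (h i)) =
    (\sum_(i <- s) a i * expR (h i) * h i) * (\sum_(i <- s) a i) ->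
  {in s &, forall i j, h i = h j}.
Proof.
move=> a_gt0 means_eq i0 j0 si0 sj0.
pose A := \sum_(i <- s) a i; pose B := \sum_(i <- s) a i * expR (h i).
pose H := \sum_(i <- s) a i * h i; pose G := \sum_(i <- s) a i * expR (h i) * h i.
have sum_gt0 (F : I -> R) : {in s, forall i, 0 < F i} -> 0 < \sum_(i <- s) F i.
  move=> F_gt0; rewrite big_seq (big_rem i0) //= si0.
  by rewrite (lt_le_trans (F_gt0 _ si0)) // lerDl sumr_ge0 // => j /F_gt0/ltW.
have A_gt0 : 0 < A by exact: sum_gt0.
have B_gt0 : 0 < B by apply: sum_gt0 => i si; rewrite mulr_gt0 ?a_gt0 ?expR_gt0.
pose c := ln (B / A).
have expc : expR c = B / A by rewrite lnK // posrE divr_gt0.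
(* With [expR c] the ratio of the tilted and untilted masses, [E] is a
   nonnegative function with zero sum, by the hypothesis on the means. *)
pose E i := a i * ((h i - c) * (expR (h i) - expR c)).
have sumE : \sum_(i <- s) E i = 0.
  have -> : \sum_(i <- s) E i = G - expR c * H - c * B + c * expR c * A.
    rewrite !mulr_sumr -!sumrB -big_split /=.
    by apply: eq_bigr => i _; rewrite /E; ring.
  have G_eq : G = H * B / A by rewrite means_eq mulfK ?gt_eqF.
  by rewrite G_eq expc; field; rewrite gt_eqF.
have E_eq0 : {in s, forall i, h i = c}.
  move: sumE => /eqP; rewrite big_seq psumr_eq0 => [/allP E0 i si|i si].
    apply: expR_mono_eq0; have /implyP/(_ si)/eqP := E0 i si.
    by rewrite /E => /eqP; rewrite mulf_eq0 gt_eqF ?a_gt0 //= => /eqP.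
  by rewrite /E mulr_ge0 ?expR_mono_ge0 // ltW ?a_gt0.
by rewrite !E_eq0.
Qed.

End RealInequalities.

Section DotProduct.
Context {R : realType} {d : nat}.
Implicit Types (w x y v : 'rV[R]_d).

Lemma dotrDr w x y : dotr w (x + y) = dotr w x + dotr w y.
Proof. by rewrite /dotr -big_split; apply: eq_bigr => i _; rewrite mxE mulrDr. Qed.

Lemma dotrZr w (s : R) x : dotr w (s *: x) = s * dotr w x.
Proof. by rewrite /dotr mulr_sumr; apply: eq_bigr => i _; rewrite mxE mulrCA. Qed.

Lemma dotrC w x : dotr w x = dotr x w.
Proof. by apply: eq_bigr => i _; rewrite mulrC. Qed.

Lemma dotr_delta w (i : 'I_d) : dotr w (delta_mx 0 i) = w ord0 i.
Proof.
rewrite /dotr (bigD1 i) //= big1 => [|j /negbTE ji]; last by rewrite mxE ji andbF mulr0.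
by rewrite mxE !eqxx mulr1 addr0.
Qed.

Lemma is_derive_dotr w x v : is_derive x v (dotr w) (dotr w v).
Proof.
apply/is_derive_line0.
have -> : (fun s => dotr w (x + s *: v)) = cst (dotr w x) + dotr w v *: id.
  by apply/funext => s; rewrite /= dotrDr dotrZr mulrC.
by apply: is_derive_eq; rewrite add0r /GRing.scale /= mulr1.
Qed.

Lemma continuous_dotr w : continuous (dotr w).
Proof.
rewrite /dotr; apply: continuous_big => [|i _]; first exact: add_continuous.
by move=> t; apply: continuousM; [exact: cst_continuous | exact: coord_continuous].
Qed.

Lemma prod_expR_expvec (m : mpoly.multinom d) (t : 'rV[R]_d) :
  \prod_i expR (t ord0 i) ^+ m i = expR (dotr (expvec R m) t).
Proof. by rewrite /dotr expR_sum; apply: eq_bigr => i _; rewrite mxE expRM_natl. Qed.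

Lemma expvec_mnm0 : expvec R (@mpoly.mnm0 d) = 0.
Proof. by apply/rowP => j; rewrite !mxE mpoly.mnm0E. Qed.

Lemma expvec_mnm1 (i : 'I_d) : expvec R (mpoly.mnm1 i) = delta_mx 0 i.
Proof. by apply/rowP => j; rewrite !mxE mpoly.mnm1E eq_sym. Qed.

End DotProduct.

Section UnitSupport.
Context {R : realType} {d : nat} (B : Defs.series R d).
Hypotheses (supp0 : supp B mpoly.mnm0) (supp1 : forall i, supp B (mpoly.mnm1 i)).

Lemma full_rank_unit_support : full_rank B.
Proof.
exists [seq delta_mx 0 i | i <- enum 'I_d]; split.
  move=> v /mapP[i _ ->]; exists (mpoly.mnm1 i), mpoly.mnm0.
  by rewrite expvec_mnm1 expvec_mnm0 subr0.
suff -> : vector.span [seq delta_mx 0 i | i <- enum 'I_d] = fullv :> {vspace 'rV[R]_d}.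
  by rewrite dimvf /dim /= mul1n.
apply/eqP; rewrite eqEsubv subvf /=; apply/subvP => v _; rewrite (row_sum_delta v).
apply: memv_suml => i _; apply/memvZ/memv_span.
by apply/mapP; exists i; rewrite ?mem_enum.
Qed.

Lemma aperiodic_unit_support : aperiodic B.
Proof.
move=> q _ [p [r [[i p_ndvd] per]]].
have [k0] := per _ supp0; have [k1] := per _ (supp1 i).
have -> : (\sum_(j < d) p j * mpoly.mnm1 i j)%N = p i.
  rewrite (bigD1 i) //= big1 ?mpoly.mnm1E ?eqxx ?muln1 ?addn0 // => j /negbTE ji.
  by rewrite mpoly.mnm1E eq_sym ji muln0.
rewrite big1 => [e1 e0|j _]; last by rewrite mpoly.mnm0E muln0.
have pi_eq : (p i + q * k0 = q * k1)%N by lia.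
by move: p_ndvd; rewrite -(dvdn_addl _ (dvdn_mulr k0 (dvdnn q))) pi_eq dvdn_mulr.
Qed.

End UnitSupport.

Section ExponentialSum.
Variables (R : realType) (d : nat) (P : mpoly.mpoly d R).

Definition weight (t : 'rV[R]_d) (m : mpoly.multinom d) : R :=
  mpoly.mcoeff m P * expR (dotr (expvec R m) t).

Definition expsum (t : 'rV[R]_d) : R := \sum_(m <- mpoly.msupp P) weight t m.

Lemma Kfun_expsum t : Kfun P t = ln (expsum t).
Proof.
by rewrite /Kfun mpoly.mevalE; congr ln; apply: eq_bigr => m _; rewrite prod_expR_expvec.
Qed.

Lemma weightD t u m : weight (t + u) m = weight t m * expR (dotr (expvec R m) u).
Proof. by rewrite /weight dotrDr expRD mulrA. Qed.

Lemma is_derive_expsum x v :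
  is_derive x v expsum (\sum_(m <- mpoly.msupp P) weight x m * dotr (expvec R m) v).
Proof.
apply: is_derive_big_seq => m.
have -> : weight^~ m = mpoly.mcoeff m P \*: (expR \o dotr (expvec R m)) by [].
apply: is_derive_eq (is_deriveZ _ (is_derive_real_comp (is_derive_dotr _ x v) (is_derive_expR _))) _.
by rewrite /weight scalerAl.
Qed.

Lemma continuous_expsum : continuous expsum.
Proof.
apply: continuous_big => [|m _]; first exact: add_continuous.
move=> t; apply: (@continuousM _ _ (cst (mpoly.mcoeff m P)) (expR \o dotr (expvec R m))).
  exact: cst_continuous.
exact: continuous_comp (@continuous_dotr _ _ (expvec R m) t) (@continuous_expR _ _).
Qed.

Hypothesis coef_ge0 : forall m, 0 <= mpoly.mcoeff m P.
Hypothesis sqfree_msupp :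
  forall m : mpoly.multinom d, (forall i, (m i <= 1)%N) -> m \in mpoly.msupp P.

Lemma weight_gt0 t m : m \in mpoly.msupp P -> 0 < weight t m.
Proof.
by move=> m_supp; rewrite mulr_gt0 ?expR_gt0 // lt0r coef_ge0 andbT -mpoly.mcoeff_msupp.
Qed.

Lemma weight_le_expsum t m : m \in mpoly.msupp P -> weight t m <= expsum t.
Proof.
move=> m_supp; rewrite /expsum (bigD1_seq m) //= ?mpoly.msupp_uniq //.
by rewrite lerDl sumr_ge0 // => m' _; rewrite mulr_ge0 ?expR_ge0.
Qed.

Lemma mnm0_msupp : mpoly.mnm0 \in mpoly.msupp P.
Proof. by apply: sqfree_msupp => i; rewrite mpoly.mnm0E. Qed.

Lemma mnm1_msupp i : mpoly.mnm1 i \in mpoly.msupp P.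
Proof. by apply: sqfree_msupp => j; rewrite mpoly.mnm1E leq_b1. Qed.

Lemma expsum_gt0 t : 0 < expsum t.
Proof. exact: lt_le_trans (weight_gt0 t mnm0_msupp) (weight_le_expsum t mnm0_msupp). Qed.

Section Tilt.
Variable lam : 'rV[R]_d.
Hypothesis lam_in01 : forall i, 0 < lam ord0 i < 1.

Definition Klam (t : 'rV[R]_d) : R := Kfun P t - dotr lam t.

Lemma is_derive_Klam x v : is_derive x v Klam
  ((expsum x)^-1 * (\sum_(m <- mpoly.msupp P) weight x m * dotr (expvec R m) v) - dotr lam v).
Proof.
have -> : Klam = @ln R \o expsum - dotr lam by apply/funext => t; rewrite /Klam Kfun_expsum.
apply: is_deriveB (is_derive_dotr _ _ _).
exact: is_derive_real_comp (is_derive_expsum _ _) (is_derive1_ln (expsum_gt0 x)).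
Qed.

Lemma continuous_Klam : continuous Klam.
Proof.
have -> : Klam = @ln R \o expsum - dotr lam by apply/funext => t; rewrite /Klam Kfun_expsum.
move=> t; apply: continuousB; last exact: continuous_dotr.
exact: continuous_comp (@continuous_expsum t) (continuous_ln (expsum_gt0 t)).
Qed.

Definition coef_min : R := \big[Num.min/1]_(m <- mpoly.msupp P) mpoly.mcoeff m P.

Lemma coef_min_gt0 : 0 < coef_min.
Proof.
rewrite /coef_min big_seq; elim/big_rec: _ => // m x m_supp x_gt0.
by rewrite lt_min x_gt0 andbT lt0r coef_ge0 andbT -mpoly.mcoeff_msupp.
Qed.

Lemma coef_min_le m : m \in mpoly.msupp P -> coef_min <= mpoly.mcoeff m P.
Proof.
move=> m_supp; rewrite /coef_min (bigD1_seq m) ?mpoly.msupp_uniq //=.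
by rewrite ge_min lexx.
Qed.

Lemma lam_margin_gt0 i : 0 < Num.min (lam ord0 i) (1 - lam ord0 i).
Proof. by have /andP[lam_gt0 lam_lt1] := lam_in01 i; rewrite lt_min lam_gt0 subr_gt0. Qed.

Lemma Klam_coercive (t : 'rV[R]_d) i :
  ln coef_min + Num.min (lam ord0 i) (1 - lam ord0 i) * `|t ord0 i| <= Klam t.
Proof.
pose X := mpoly.Multinom [tuple (0 < t ord0 j)%R : nat | j < d].
have X_supp : X \in mpoly.msupp P by apply: sqfree_msupp => j; rewrite mpoly.mnmE leq_b1.
have ln_ge : ln coef_min + dotr (expvec R X) t <= ln (expsum t).
  rewrite -[dotr _ t]expRK -lnM ?posrE ?coef_min_gt0 ?expR_gt0 //.
  rewrite ler_ln ?posrE ?mulr_gt0 ?coef_min_gt0 ?expR_gt0 ?expsum_gt0 //.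
  apply: le_trans (weight_le_expsum t X_supp).
  by rewrite ler_pM2r ?expR_gt0 ?coef_min_le.
have term_ge j : Num.min (lam ord0 j) (1 - lam ord0 j) * `|t ord0 j|
    <= expvec R X ord0 j * t ord0 j - lam ord0 j * t ord0 j.
  by rewrite -mulrBl mxE mpoly.mnmE; exact: min_mul_norm_le.
have dot_ge : Num.min (lam ord0 i) (1 - lam ord0 i) * `|t ord0 i|
    <= dotr (expvec R X) t - dotr lam t.
  rewrite /dotr -sumrB (bigD1 i) //= (le_trans (term_ge i)) // lerDl sumr_ge0 // => j _.
  apply: le_trans (term_ge j); rewrite mulr_ge0 // le_min.
  by have /andP[lam_gt0 lam_lt1] := lam_in01 j; rewrite ltW // subr_ge0 ltW.
rewrite /Klam Kfun_expsum; lra.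
Qed.

Definition Klam_critical (tau : 'rV[R]_d) : Prop :=
  forall i, is_derive tau (delta_mx 0 i) Klam 0.

Lemma critical_mean tau : Klam_critical tau -> forall v,
  \sum_(m <- mpoly.msupp P) weight tau m * dotr (expvec R m) v = dotr lam v * expsum tau.
Proof.
move=> crit v.
have mean_i i :
    \sum_(m <- mpoly.msupp P) weight tau m * expvec R m ord0 i = lam ord0 i * expsum tau.
  have := @derive_val _ _ _ _ _ _ _ (is_derive_Klam tau (delta_mx 0 i)).
  rewrite (@derive_val _ _ _ _ _ _ _ (crit i)) => /eqP.
  rewrite eq_sym subr_eq0 !dotr_delta => /eqP.
  under eq_bigr do rewrite dotr_delta.
  by move=> <-; rewrite mulrAC mulVf ?mul1r // gt_eqF // expsum_gt0.
rewrite /dotr mulr_suml; under eq_bigr do rewrite mulr_sumr.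
rewrite exchange_big; apply: eq_bigr => i _.
by rewrite mulrAC -mean_i mulr_suml; apply: eq_bigr => m _; rewrite mulrA.
Qed.

Lemma critical_unique tau sig : Klam_critical tau -> Klam_critical sig -> tau = sig.
Proof.
move=> crit_tau crit_sig; pose h m := dotr (expvec R m) (sig - tau).
have weight_sig m : weight tau m * expR (h m) = weight sig m by rewrite -weightD addrC subrK.
have h_const : {in mpoly.msupp P &, forall m m', h m = h m'}.
  apply: (tilted_mean_eq_const (a := weight tau)) => [m|]; first exact: weight_gt0.
  have sum_tilt : \sum_(m <- mpoly.msupp P) weight tau m * expR (h m) = expsum sig.
    by apply: eq_bigr => m _; exact: weight_sig.
  have sum_tilt_h : \sum_(m <- mpoly.msupp P) weight tau m * expR (h m) * h m
      = dotr lam (sig - tau) * expsum sig.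
    by rewrite -critical_mean //; apply: eq_bigr => m _; rewrite weight_sig.
  by rewrite sum_tilt sum_tilt_h critical_mean // mulrAC.
apply/rowP => i; apply/eqP; rewrite eq_sym -subr_eq0.
have := h_const _ _ (mnm1_msupp i) mnm0_msupp.
rewrite /h expvec_mnm0 expvec_mnm1 dotrC dotr_delta !mxE => ->.
by rewrite /dotr big1 // => j _; rewrite mxE mul0r.
Qed.

Lemma critical_exists : exists tau, Klam_critical tau.
Proof.
have [tau tau_min] := coercive_has_min continuous_Klam lam_margin_gt0 Klam_coercive.
exists tau => i; apply: is_derive_at_min tau_min => y.
exact: @ex_derive _ _ _ _ _ _ _ (is_derive_Klam y _).
Qed.

End Tilt.

End ExponentialSum.

Theorem lemma9 (R : realType) (d : nat) (P : mpoly.mpoly d R) :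
  (1 <= d)%N ->
  (forall m : mpoly.multinom d, (forall i, (m i <= 1)%N) -> 0 < mpoly.mcoeff m P) ->
  (forall m : mpoly.multinom d, ~ (forall i, (m i <= 1)%N) -> mpoly.mcoeff m P = 0) ->
  full_rank (fun m => mpoly.mcoeff m P) /\
  aperiodic (fun m => mpoly.mcoeff m P) /\
  forall lam : 'rV[R]_d, (forall i, 0 < lam ord0 i < 1) ->
    (forall l : 'I_d -> \bar R, (exists i, l i = +oo%E \/ l i = -oo%E) ->
       tends_to_pinfty (fun t => Kfun P t - dotr lam t) l) /\
    (exists! tau : 'rV[R]_d,
       forall i : 'I_d, is_derive tau (delta_mx 0 i) (fun t => Kfun P t - dotr lam t) 0).
Proof.
move=> _ coef_gt0 coef_eq0.
have coef_ge0 m : 0 <= mpoly.mcoeff m P.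
  by have [/coef_gt0/ltW|/coef_eq0->] := pselect (forall i, (m i <= 1)%N).
have sqfree_msupp (m : mpoly.multinom d) : (forall i, (m i <= 1)%N) -> m \in mpoly.msupp P.
  by move/coef_gt0; rewrite mpoly.mcoeff_msupp => /lt0r_neq0.
have supp0 : supp (fun m => mpoly.mcoeff m P) mpoly.mnm0.
  by rewrite /supp /= -mpoly.mcoeff_msupp mnm0_msupp.
have supp1 i : supp (fun m => mpoly.mcoeff m P) (mpoly.mnm1 i).
  by rewrite /supp /= -mpoly.mcoeff_msupp mnm1_msupp.
split; first exact: full_rank_unit_support.
split; first exact: aperiodic_unit_support.
move=> lam lam_in01; split.
  move=> l [i l_inf]; apply: tends_to_pinfty_coercive l_inf.
    exact: lam_margin_gt0.
  by move=> t; apply: (Klam_coercive coef_ge0 sqfree_msupp lam_in01).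
have [tau crit_tau] := critical_exists coef_ge0 sqfree_msupp lam_in01.
by exists tau; split=> // sig /(critical_unique coef_ge0 sqfree_msupp crit_tau).
Qed.
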